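(* For every integer $m\ge1$: $D_{-m}(C(t);n)=0$ for $1\le n\le m$, and for $n\ge m+1$ $$D_{-m}(C(t);n)=(-1)^{\binom{m+1}{2}}\,t^{\,n-m-1}\,D_{m+1}(C(t);n-m-1)$$ as an identity of polynomials in $t$.
   Context: The Narayana polynomials are $C_0(t)=1$ and $C_n(t)=\sum_{k=0}^{n-1}\binom{n-1}{k}\binom{n}{k}\frac{1}{k+1}t^k$ for $n\ge1$; they are extended by $C_n(t)=0$ for $n<0$. Their generating function $\sum_{n\ge0}C_n(t)x^n$ equals $\frac{1+x(t-1)-\sqrt{1-2x(t+1)+x^2(t-1)^2}}{2tx}$. For $m\in\mathbb Z$ and $n\ge0$, $D_m(C(t);n)=\det(C_{i+j+m}(t))_{i,j=0}^{n-1}$, the $0\times0$ determinant being $1$. *)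

From HB Require Import structures.
From mathcomp Require Import all_boot all_order all_algebra.
Set Implicit Arguments. Unset Strict Implicit. Unset Printing Implicit Defensive.
Import Order.TTheory GRing.Theory Num.Theory.
Local Open Scope ring_scope.

Definition Narayana (n : int) : {poly rat} :=
  match n with
  | Posz 0 => 1
  | Posz n'.+1 =>
      \sum_(k < n'.+1)
        ((('C(n', k) * 'C(n'.+1, k))%:R / (k.+1)%:R : rat) *: 'X^k)
  | Negz _ => 0
  end.

Definition HankelD (m : int) (n : nat) : {poly rat} :=
  \det (\matrix_(i < n, j < n) Narayana ((i + j)%:Z + m)).

From HB Require Import structures.
From mathcomp Require Import all_boot all_order all_algebra.
From mathcomp Require Import perm zify ring.
Import GRing.Theory Num.Theory.
Local Open Scope ring_scope.

(* Write c_k = C_k(t) and c(x) = sum_k c_k x^k over Q[t].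
   1. The coefficient formula gives the three-term recurrence
      (n+1) C_n = (2n-1)(1+t) C_(n-1) - (n-2)(1-t)^2 C_(n-2).
   2. It says that Y = 1 + (t-1)x - 2t x^2 c(x) solves 2 Delta Y' = Delta' Y,
      Delta = 1 - 2(1+t)x + (1-t)^2 x^2; by uniqueness for a first-order
      linear ODE, Y^2 = Delta.  Hence c_(s+1) = c_s + t sum_(a<s) c_a c_(s-a)
      and 1/c(x) = g(x) := 1 - x - t x (c(x) - 1).
   3. For N = K + n the Hankel matrices B = (c_(i+j-N+1)) and
      W = (g_(N-1-i-j)) are mutually inverse and det B = +-1, so Jacobi's
      complementary minor identity gives det B_22 = det B * det W_11.
      For K = n - m - 1, B_22 is the matrix of D_(-m)(C;n) and W_11 is -t
      times the reversed matrix of D_(m+1)(C;K); a parity count of the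
      signs finishes the proof.  For n <= m the first row vanishes. *)

Local Notation Qt := {poly rat}.

Definition nara (n : nat) : Qt := Narayana n%:Z.

(* 1/z! for z >= 0, extended by 0 to negative z; this makes the
   coefficient formula below valid for every integer index. *)
Definition invfact (z : int) : rat :=
  match z with Posz k => (k`!%:R)^-1 | Negz _ => 0 end.

Lemma invfact_pred (z : int) : invfact (z - 1) = z%:~R * invfact z.
Proof.
case: z => [[|k]|k] /=.
- by rewrite mul0r.
- rewrite subn1 /= factS natrM invfM mulrA.
  by rewrite mulfV ?mul1r // pnatr_eq0.
- by rewrite mulr0.
Qed.

Definition narcoef (n : nat) (k : int) : rat :=
  (n.-1)`!%:R * n`!%:R * invfact k * invfact (k + 1)
  * invfact (n.-1%:Z - k) * invfact (n%:Z - k).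

Lemma coef_nara (n k : nat) : (nara n.+1)`_k = narcoef n.+1 k.
Proof.
rewrite /nara /Narayana coef_sum.
under eq_bigr => j _ do rewrite coefZ coefXn.
rewrite /narcoef /=.
have [hk | hk] := ltnP k n.+1; last first.
  rewrite big1; last first.
    move=> j _; rewrite (_ : (k == j) = false) ?mulr0 //.
    by apply/negbTE; apply/eqP => hkj; have := ltn_ord j; lia.
  by rewrite (_ : n%:Z - k%:Z = Negz (k - n.+1)) /= ?mulr0 ?mul0r //; lia.
rewrite (bigD1 (Ordinal hk)) //= eqxx mulr1 big1 ?addr0; last first.
  move=> j hj; rewrite (_ : (k == j :> nat) = false) ?mulr0 //.
  by apply/eqP => e; move/eqP: hj; apply; apply/val_inj; rewrite /= e.
rewrite (_ : n%:Z - k%:Z = (n - k)%N :> int); last by lia.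
rewrite (_ : n.+1%:Z - k%:Z = (n.+1 - k)%N :> int); last by lia.
rewrite /invfact addn1 -(bin_fact (hk : (k <= n)%N)) -(bin_fact (ltnW hk)) factS !natrM.
have fact_neq0 j : (j`!%:R : rat) != 0 by rewrite pnatr_eq0 -lt0n fact_gt0.
have succ_neq0 : (k.+1%:R : rat) != 0 by rewrite pnatr_eq0.
field.
by rewrite !fact_neq0 nat1r succ_neq0.
Qed.

(* Every coefficient occurring in the recurrence for C_(p+4) is a
   polynomial multiple, in k and p, of the common factor below. *)
Definition narnorm (p : nat) (k : int) : rat :=
  p`!%:R * (p.+1)`!%:R * (k + 1)%:~R * (p.+3%:Z - k)%:~R *
  invfact (k + 1) ^+ 2 * invfact (p.+3%:Z - k) ^+ 2.

Lemma invfact_succ (a b : int) : a = b - 1 -> invfact a = b%:~R * invfact b.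
Proof. by move->; apply: invfact_pred. Qed.

Lemma invfact_eq (a b : int) : a = b -> invfact a = invfact b.
Proof. by move->. Qed.

Ltac raise_invfact a b := rewrite (@invfact_succ a b); last lia.

Lemma narcoef3 p k :
  narcoef p.+3 k = (p.+1 * p.+2 * p.+2 * p.+3)%:R * narnorm p k.
Proof.
rewrite /narcoef /narnorm /=.
raise_invfact k (k + 1); raise_invfact (p.+2%:Z - k) (p.+3%:Z - k).
rewrite !factS !natrM; ring.
Qed.

Lemma narcoef2 p k : narcoef p.+2 k =
  (p.+1 * p.+2)%:R * ((p.+2%:Z - k) * (p.+3%:Z - k))%:~R * narnorm p k.
Proof.
rewrite /narcoef /narnorm /=.
raise_invfact k (k + 1); raise_invfact (p.+1%:Z - k) (p.+2%:Z - k).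
raise_invfact (p.+2%:Z - k) (p.+3%:Z - k).
rewrite !factS !natrM; ring.
Qed.

Lemma narcoef2_pred p k : narcoef p.+2 (k - 1) =
  (p.+1 * p.+2)%:R * (k * (k + 1))%:~R * narnorm p k.
Proof.
rewrite /narcoef /narnorm /=.
rewrite (@invfact_eq (k - 1 + 1) k); last lia.
rewrite (@invfact_eq (p.+1%:Z - (k - 1)) (p.+2%:Z - k)); last lia.
rewrite (@invfact_eq (p.+2%:Z - (k - 1)) (p.+3%:Z - k)); last lia.
raise_invfact (k - 1) k; raise_invfact k (k + 1).
raise_invfact (p.+2%:Z - k) (p.+3%:Z - k).
rewrite !factS !natrM; ring.
Qed.

Lemma narcoef1 p k : narcoef p.+1 k =
  ((p.+1%:Z - k) * (p.+2%:Z - k) * (p.+2%:Z - k) * (p.+3%:Z - k))%:~R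
  * narnorm p k.
Proof.
rewrite /narcoef /narnorm /=.
raise_invfact k (k + 1); raise_invfact (p%:Z - k) (p.+1%:Z - k).
raise_invfact (p.+1%:Z - k) (p.+2%:Z - k).
raise_invfact (p.+2%:Z - k) (p.+3%:Z - k).
rewrite !factS !natrM; ring.
Qed.

Lemma narcoef1_pred p k : narcoef p.+1 (k - 1) =
  (k * (k + 1) * (p.+2%:Z - k) * (p.+3%:Z - k))%:~R * narnorm p k.
Proof.
rewrite /narcoef /narnorm /=.
rewrite (@invfact_eq (k - 1 + 1) k); last lia.
rewrite (@invfact_eq (p%:Z - (k - 1)) (p.+1%:Z - k)); last lia.
rewrite (@invfact_eq (p.+1%:Z - (k - 1)) (p.+2%:Z - k)); last lia.
raise_invfact (k - 1) k; raise_invfact k (k + 1).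
raise_invfact (p.+1%:Z - k) (p.+2%:Z - k).
raise_invfact (p.+2%:Z - k) (p.+3%:Z - k).
rewrite !factS !natrM; ring.
Qed.

Lemma narcoef1_pred2 p k : narcoef p.+1 (k - 2) =
  ((k - 1) * k * k * (k + 1))%:~R * narnorm p k.
Proof.
rewrite /narcoef /narnorm /=.
rewrite (@invfact_eq (k - 2) (k - 1 - 1)); last lia.
rewrite (@invfact_eq (k - 2 + 1) (k - 1)); last lia.
rewrite (@invfact_eq (p%:Z - (k - 2)) (p.+2%:Z - k)); last lia.
rewrite (@invfact_eq (p.+1%:Z - (k - 2)) (p.+3%:Z - k)); last lia.
raise_invfact (k - 1 - 1) (k - 1); raise_invfact (k - 1) k.
raise_invfact k (k + 1); raise_invfact (p.+2%:Z - k) (p.+3%:Z - k).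
rewrite !factS !natrM; ring.
Qed.

Lemma coef_X_nara n k : ('X * nara n.+1)`_k = narcoef n.+1 (k%:Z - 1).
Proof.
rewrite coefXM; case: k => [|k] /=; first by rewrite /narcoef /= !mulr0 !mul0r.
by rewrite coef_nara (_ : k.+1%:Z - 1 = k) //; lia.
Qed.

Lemma coef_XX_nara n k : ('X * ('X * nara n.+1))`_k = narcoef n.+1 (k%:Z - 2).
Proof.
rewrite coefXM; case: k => [|k] /=; first by rewrite /narcoef /= !mulr0 !mul0r.
by rewrite coef_X_nara (_ : k.+1%:Z - 2 = k%:Z - 1) //; lia.
Qed.

Lemma nara_rec p : (p.+4)%:R *: nara p.+3 =
  (2 * p + 5)%:R *: (nara p.+2 + 'X * nara p.+2)
  - (p.+1)%:R *: (nara p.+1 - 2%:R *: ('X * nara p.+1) + 'X * ('X * nara p.+1)).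
Proof.
apply/polyP => k.
rewrite !(coefZ, coefD, coefN, coefB) !coef_nara coef_X_nara coef_XX_nara.
rewrite coef_X_nara narcoef3 narcoef2 narcoef2_pred narcoef1 narcoef1_pred.
rewrite narcoef1_pred2 !natrM; ring.
Qed.

Lemma nara0 : nara 0 = 1. Proof. by []. Qed.

Lemma nara1 : nara 1 = 1.
Proof. by rewrite /nara /= big_ord1 /= div1r invr1 scale1r expr0. Qed.

Lemma nara2 : nara 2 = 1 + 'X.
Proof.
rewrite /nara /= big_ord_recr big_ord1 /=.
by rewrite div1r invr1 scale1r expr0 expr1 divff ?scale1r.
Qed.

Definition agree {R : nzRingType} (M : nat) (p q : {poly R}) :=
  forall i, (i < M)%N -> p`_i = q`_i.

Section FirstOrderODE.

Variable R : idomainType.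
Hypothesis charR0 : forall n : nat, n.+1%:R != 0 :> R.

Lemma agree_mull M (p q r : {poly R}) : agree M p q -> agree M (r * p) (r * q).
Proof.
move=> h i hi; rewrite !coefM; apply: eq_bigr => j _; rewrite h //.
by have := ltn_ord j; lia.
Qed.

(* If D(0) = 1 and u(0) = 0, then D u' = D' u (mod x^M) forces
   u = 0 (mod x^(M+1)): the coefficient of x^i in D u' - D' u is
   (i+1) u_(i+1) plus terms involving lower coefficients of u only. *)
Lemma ode_unique (D u : {poly R}) M : D`_0 = 1 -> u`_0 = 0 ->
  agree M (D * u^`() - D^`() * u) 0 -> agree M.+1 u 0.
Proof.
move=> D0 u0 h.
suff low_zero i : (i < M.+1)%N -> forall j, (j <= i)%N -> u`_j = 0.
  by move=> i hi; rewrite coef0; apply: (low_zero i hi).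
elim: i => [|i IH] hi j hj; first by move: hj; rewrite leqn0 => /eqP ->.
have {}IH j' : (j' <= i)%N -> u`_j' = 0 by apply: IH; lia.
have [hji | hji] := ltnP j i.+1; first by apply: IH; lia.
have -> : j = i.+1 by lia.
have := h i (ltac:(lia)); rewrite coef0 coefB !coefM.
rewrite [X in X - _ = _]big_ord_recl.
rewrite [X in _ + X - _ = _]big1; last first.
  move=> k _; rewrite coef_deriv /= IH ?mul0rn ?mulr0 //.
  by rewrite /bump /=; have := ltn_ord k; lia.
rewrite addr0 big1; last by
  move=> k _; rewrite IH ?mulr0 //; have := ltn_ord k; lia.
rewrite subr0 coef_deriv D0 mul1r subn0 => /eqP.
by rewrite -mulr_natr mulf_eq0 (negbTE (charR0 i)) orbF => /eqP.
Qed.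

End FirstOrderODE.

Lemma natr_Qt_neq0 (n : nat) : n.+1%:R != 0 :> Qt.
Proof. by rewrite -polyC_natr polyC_eq0 pnatr_eq0. Qed.

(* Power series in x with coefficients in Q[t] are truncated to degree
   below M: gen M is the truncation of c(x). *)
Definition gen M : {poly Qt} := \poly_(i < M) nara i.

Lemma coef_gen M j : (j < M)%N -> (gen M)`_j = nara j.
Proof. by move=> h; rewrite coef_poly h. Qed.

(* Delta = 1 + delta1 x + delta2 x^2, the discriminant of the quadratic
   equation satisfied by c(x). *)
Definition delta1 : Qt := - (2%:R * (1 + 'X)).
Definition delta2 : Qt := (1 - 'X) ^+ 2.
Definition Delta : {poly Qt} := 1 + delta1%:P * 'X + delta2%:P * ('X * 'X).

(* Y = 1 + (t-1)x - 2t x^2 c(x), the would-be square root of Delta. *)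
Definition Yroot M : {poly Qt} :=
  1 + ('X - 1 : Qt)%:P * 'X - (2%:R * 'X : Qt)%:P * ('X * gen M).

(* The defect of the functional equation c = 1 + (1-t)x c + t x^2 c^2. *)
Definition quadr M : {poly Qt} :=
  gen M + ('X - 1 : Qt)%:P * ('X * gen M)
  - ('X : Qt)%:P * ('X * (gen M * gen M)) - 1.

Lemma Yroot_sqr M : Yroot M ^+ 2 - Delta = - (4%:R * 'X : Qt)%:P * ('X * quadr M).
Proof. rewrite /Yroot /Delta /quadr /delta1 /delta2; ring. Qed.

Lemma Delta0 : Delta`_0 = 1.
Proof. by rewrite /Delta !(coefD, coefCM, coefXM, coef1, coefX) /= !mulr0 !addr0. Qed.

Lemma Delta_ode_expand (q : {poly Qt}) : 2%:R * Delta * q^`() - Delta^`() * q =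
  2%:R * q^`() + (2%:R * delta1)%:P * ('X * q^`())
  + (2%:R * delta2)%:P * ('X * ('X * q^`()))
  - delta1%:P * q - (2%:R * delta2)%:P * ('X * q).
Proof. by rewrite /Delta !derivE; ring. Qed.

(* The recurrence is exactly the statement that Y solves the ODE
   2 Delta Y' = Delta' Y (up to the truncation order). *)
Lemma Yroot_ode N :
  agree N (2%:R * Delta * (Yroot N.+1)^`() - Delta^`() * Yroot N.+1) 0.
Proof.
move=> i hi; rewrite Delta_ode_expand coef0 /Yroot.
rewrite !(coefB, coefD, coefN, coefCM, coefXM, mulr_natl, coefMn, coef_deriv,
  coef1, coefX) /=.
case: i hi => [|[|[|i]]] hi /=; rewrite !coef_gen; try lia.
- by rewrite nara0 /delta1; ring.
- by rewrite nara0 nara1 /delta1 /delta2; ring.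
- by rewrite nara0 nara1 nara2 /delta1 /delta2; ring.
- have /eqP := nara_rec i; rewrite !scaler_nat -subr_eq0 => /eqP rec.
  by rewrite -(mulr0 (- (4%:R * 'X))) -rec /delta1 /delta2; ring.
Qed.

(* Hence Y^2 = Delta (up to the truncation order): u = Y^2 - Delta
   satisfies Delta u' - Delta' u = Y (2 Delta Y' - Delta' Y) and u(0) = 0. *)
Lemma Yroot_sqr_Delta N : agree N.+1 (Yroot N.+1 ^+ 2 - Delta) 0.
Proof.
have Y0 : (Yroot N.+1)`_0 = 1.
  by rewrite /Yroot !(coefB, coefD, coefCM, coefXM, coef1) coefX /= !mulr0 subr0 addr0.
apply: (@ode_unique _ natr_Qt_neq0 _ _ _ Delta0).
  by rewrite coefB expr2 coef0M Y0 Delta0 mulr1 subrr.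
have -> : Delta * (Yroot N.+1 ^+ 2 - Delta)^`()
          - Delta^`() * (Yroot N.+1 ^+ 2 - Delta)
    = Yroot N.+1 * (2%:R * Delta * (Yroot N.+1)^`() - Delta^`() * Yroot N.+1).
  by rewrite derivB expr2 derivM; ring.
by move=> i hi; rewrite (@agree_mull _ _ _ _ (Yroot N.+1) (Yroot_ode N) i hi) mulr0.
Qed.

(* The convolution recurrence c_(s+1) = c_s + t sum_(a<s) c_a c_(s-a),
   read off from the coefficient of x^(s+2) in Y^2 - Delta = 0. *)
Lemma nara_conv s : nara s.+1 = nara s + 'X * \sum_(a < s) nara a * nara (s - a).
Proof.
have := @Yroot_sqr_Delta s.+2 s.+2 (ltnSn _).
rewrite Yroot_sqr coef0 mulNr coefN coefCM coefXM /= => /eqP.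
have X4_neq0 : (4%:R * 'X : Qt) != 0.
  by rewrite mulf_eq0 negb_or (natr_Qt_neq0 3) polyX_eq0.
rewrite oppr_eq0 mulf_eq0 (negbTE X4_neq0) /= /quadr => /eqP.
rewrite !(coefB, coefD, coefCM, coefXM, coef1) /= coefM big_ord_recr /=.
rewrite !coef_gen; try lia.
rewrite (eq_bigr (fun a : 'I_s => nara a * nara (s - a))); last first.
  by move=> a _; rewrite !coef_gen //; have := ltn_ord a; lia.
rewrite subnn nara0 mulr1 subr0 => h.
by apply/subr0_eq; rewrite -[RHS]h; ring.
Qed.

(* g(x) = 1 - x - t sum_(s>=1) c_s x^(s+1), the inverse of c(x). *)
Definition nara_inv (s : nat) : Qt :=
  match s with 0 => 1 | 1 => -1 | s'.+1 => - ('X * nara s') end.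

Lemma nara_inv_conv s : \sum_(a < s.+1) nara a * nara_inv (s - a) = (s == 0)%:R.
Proof.
case: s => [|s]; first by rewrite big_ord1 /= nara0 mulr1.
rewrite big_ord_recr /= subnn mulr1 big_ord_recr /= subSnn mulrN1.
rewrite (eq_bigr (fun a : 'I_s => - 'X * (nara a * nara (s - a)))); last first.
  move=> a _ /=; have ha := ltn_ord a.
  rewrite (_ : (s.+1 - a = (s - a).+1)%N); last by lia.
  rewrite (_ : (s - a = (s - a).-1.+1)%N); last by lia.
  by rewrite /= (_ : ((s - a).-1.+1 = s - a)%N); [ring | lia].
by rewrite -mulr_sumr nara_conv; ring.
Qed.

Definition nara_sub (a b : nat) : Qt := if (a < b)%N then 0 else nara (a - b).
Definition nara_inv_sub (a b : nat) : Qt :=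
  if (a < b)%N then 0 else nara_inv (a - b).

Lemma Narayana_sub (a b : nat) : Narayana (a%:Z - b%:Z) = nara_sub a b.
Proof.
rewrite /nara_sub; have [h | h] := ltnP a b.
- by rewrite (_ : a%:Z - b%:Z = Negz (b - a).-1) //; lia.
- by rewrite (_ : a%:Z - b%:Z = Posz (a - b)) //; lia.
Qed.

(* Entry (i, j) of the product of the two Hankel matrices below: the
   product telescopes to a single convolution sum_(a+b = i-j) c_a g_b. *)
Lemma hankel_inverse_entry n (i j : nat) : (i < n)%N -> (j < n)%N ->
  \sum_(k < n) nara_sub (i + k) n.-1 * nara_inv_sub n.-1 (k + j) = (i == j)%:R.
Proof.
case: n => [|N] hi hj //=.
rewrite -(big_mkord xpredT (fun k => nara_sub (i + k) N * nara_inv_sub N (k + j))).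
rewrite (big_cat_nat _ (n := (N - i)%N)) //=; last by lia.
rewrite big_nat big1 ?add0r; last first.
  by move=> k hk; rewrite /nara_sub ifT ?mul0r //; move: hk; lia.
rewrite -{1}(add0n (N - i)%N) big_addn (_ : (N.+1 - (N - i) = i.+1)%N); last by lia.
rewrite (eq_bigr (fun a => nara a * nara_inv_sub N (a + (N - i) + j))); last first.
  move=> a _; rewrite /nara_sub ifF; last by lia.
  by rewrite (_ : (i + (a + (N - i)) - N = a)%N) //; lia.
have [hij | hji] := ltnP i j.
  rewrite big1; last by move=> a _; rewrite /nara_inv_sub ifT ?mulr0 //; lia.
  by rewrite (_ : (i == j) = false) //; apply/negbTE; lia.
rewrite (big_cat_nat _ (n := (i - j)%N.+1)) //=; last by lia.
have -> : \sum_((i - j).+1 <= a < i.+1) nara a * nara_inv_sub N (a + (N - i) + j) = 0.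
  by rewrite big_nat big1 // => a ha; rewrite /nara_inv_sub ifT ?mulr0 //; move: ha; lia.
rewrite addr0 big_mkord.
rewrite (eq_bigr (fun a : 'I_(i - j).+1 => nara a * nara_inv ((i - j) - a))); last first.
  move=> a _; have ha := ltn_ord a; rewrite /nara_inv_sub ifF; last by lia.
  by rewrite (_ : (N - (a + (N - i) + j) = i - j - a)%N) //; lia.
by rewrite nara_inv_conv; congr (_%:R); apply/eqP/eqP; lia.
Qed.

Definition hankelB N : 'M[Qt]_N := \matrix_(i, j) nara_sub (i + j) N.-1.
Definition hankelW N : 'M[Qt]_N := \matrix_(i, j) nara_inv_sub N.-1 (i + j).

Lemma hankelBW N : hankelB N *m hankelW N = 1%:M.
Proof.
apply/matrixP => i j; rewrite !mxE.
under eq_bigr => k _ do rewrite !mxE.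
exact: hankel_inverse_entry.
Qed.

Lemma det_antitriangular (T : comNzRingType) n (M : 'M[T]_n) :
  (forall i j : 'I_n, (i + j < n.-1)%N -> M i j = 0) ->
  (forall i j : 'I_n, (i + j)%N = n.-1 -> M i j = 1) ->
  \det M = (-1) ^+ 'C(n, 2).
Proof.
elim: n M => [|n IH] M h0 h1; first by rewrite det_mx00.
rewrite (expand_det_row _ ord0) (bigD1 ord_max) //= big1 ?addr0; last first.
  move=> j hj; rewrite (h0 ord0 j) ?mul0r //=.
  have := ltn_ord j; have : (j : nat) != n.
    by apply/eqP => e; move/eqP: hj; apply; apply/val_inj.
  lia.
rewrite h1 //= mul1r /cofactor IH.
- by rewrite add0n -exprD binS bin1 addnC.
- move=> i j hij; rewrite !mxE h0 //= /bump leq0n (leqNgt n j) (ltn_ord j) /=.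
  by move: hij; lia.
- move=> i j hij; rewrite !mxE h1 //= /bump leq0n (leqNgt n j) (ltn_ord j) /=.
  by move: hij; have := ltn_ord i; lia.
Qed.

Lemma det_rev (T : comNzRingType) K (M : 'M[T]_K) :
  \det (\matrix_(i, j) M (rev_ord i) (rev_ord j)) = \det M.
Proof.
pose s := perm (@rev_ord_inj K).
have -> : \matrix_(i, j) M (rev_ord i) (rev_ord j) = row_perm s (col_perm s M).
  by apply/matrixP => i j; rewrite !mxE !permE.
rewrite row_permE col_permE !det_mulmx !det_perm odd_permV.
by rewrite mulrCA -expr2 sqrr_sign mulr1.
Qed.

(* Jacobi's complementary minor identity: if B W = 1, the lower right
   block of B has determinant det B times that of the upper left block
   of W.  Indeed B * [W_11 0; W_21 1] = [1 B_12; 0 B_22]. *)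
Lemma det_complementary_minor {T : comNzRingType} {K N : nat} {B W : 'M[T]_(K + N)} :
  B *m W = 1%:M -> \det (drsubmx B) = \det B * \det (ulsubmx W).
Proof.
move=> BW; have BWblocks := BW.
rewrite -[B]submxK -[W]submxK mulmx_block scalar_mx_block in BWblocks.
have [BW11 _ BW21 _] := eq_block_mx BWblocks.
have : B *m block_mx (ulsubmx W) 0 (dlsubmx W) 1%:M
       = block_mx 1%:M (ursubmx B) 0 (drsubmx B).
  by rewrite -[B]submxK mulmx_block BW11 BW21 !mulmx0 !mulmx1 !add0r submxK.
move/(congr1 determinant); rewrite det_mulmx det_lblock det_ublock !det1.
by rewrite mulr1 mul1r => <-.
Qed.

(* B has zeros above its anti-diagonal and c_0 = 1 on it. *)
Lemma det_hankelB N : \det (hankelB N) = (-1) ^+ 'C(N, 2).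
Proof.
apply: det_antitriangular => i j h; rewrite mxE /nara_sub.
- by rewrite ifT.
- by rewrite ifF h ?subnn //; lia.
Qed.

Lemma Narayana_neg (z : int) : z < 0 -> Narayana z = 0.
Proof. by case: z. Qed.

Lemma drsub_hankelB K m n : n = (K + m.+1)%N ->
  drsubmx (hankelB (K + n)) = \matrix_(i < n, j < n) Narayana ((i + j)%:Z + - m%:Z).
Proof.
move=> hn; apply/matrixP => i j; rewrite !mxE -Narayana_sub /=; congr Narayana.
by rewrite -subn1; move: hn; lia.
Qed.

Lemma ulsub_hankelW K m n : n = (K + m.+1)%N ->
  ulsubmx (hankelW (K + n)) = (- 'X) *: \matrix_(i, j)
    (\matrix_(i0 < K, j0 < K) Narayana ((i0 + j0)%:Z + (m.+1)%:Z))
      (rev_ord i) (rev_ord j).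
Proof.
move=> hn; apply/matrixP => i j; rewrite !mxE /nara_inv_sub /=.
have hi := ltn_ord i; have hj := ltn_ord j.
rewrite ifF; last by lia.
rewrite (_ : ((K + n).-1 - (i + j) = ((K + n).-1 - (i + j) - 2).+2)%N); last by lia.
rewrite /= (_ : (((K + n).-1 - (i + j) - 2).+1 = K - i.+1 + (K - j.+1) + m.+1)%N);
  last by lia.
by rewrite mulNr.
Qed.

(* Pairs from a disjoint union of an a-set and a b-set. *)
Lemma bin2D a b : 'C(a + b, 2) = ('C(a, 2) + 'C(b, 2) + a * b)%N.
Proof.
elim: a => [|a IH]; first by rewrite add0n mul0n addn0.
by rewrite addSn binS bin1 IH binS bin1 mulSn; lia.
Qed.

(* K^2 = 2 C(K,2) + K: ordered pairs split into unordered ones and the diagonal. *)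
Lemma bin2_sqr K : (2 * 'C(K, 2) + K = K * K)%N.
Proof. by elim: K => [|K IH] //; rewrite binS bin1; nia. Qed.

(* The sign produced by the two blocks, for n = K + m + 1. *)
Lemma hankel_sign K m :
  ('C(K + (K + m.+1), 2) + K = 'C(m.+1, 2) + 2 * ('C(K, 2) + K * m.+1 + 'C(K.+1, 2)))%N.
Proof. by rewrite !bin2D !binS !bin1; have := bin2_sqr K; nia. Qed.

Theorem theorem8 (m : nat) : (1 <= m)%N ->
  (forall n : nat, (1 <= n <= m)%N -> HankelD (- (m%:Z)) n = 0) /\
  (forall n : nat, (m.+1 <= n)%N ->
     HankelD (- (m%:Z)) n =
       (-1) ^+ 'C(m.+1, 2) * 'X^(n - m.+1) * HankelD (m.+1)%:Z (n - m.+1)).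
Proof.
move=> _; split.
  (* The first row consists of C_(j-m) with j < n <= m, all zero. *)
  case=> [|n] // /andP [_ hnm]; rewrite /HankelD (expand_det_row _ ord0).
  rewrite big1 // => j _; rewrite mxE Narayana_neg ?mul0r //=.
  by have := ltn_ord j; lia.
move=> n hn; set K := (n - m.+1)%N.
have hnK : n = (K + m.+1)%N by rewrite /K; lia.
rewrite /HankelD -(drsub_hankelB _ _ _ hnK) (det_complementary_minor (hankelBW (K + n))).
rewrite det_hankelB (ulsub_hankelW _ _ _ hnK) detZ det_rev.
have sign : (-1) ^+ 'C(K + n, 2) * (-1) ^+ K = (-1) ^+ 'C(m.+1, 2) :> Qt.
  by rewrite -exprD hnK hankel_sign exprD exprM sqrrN !expr1n mulr1.
by rewrite [(- 'X) ^+ K]exprNn !mulrA sign.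
Qed.
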